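(* For all terms $s,t$, $(\gamma s)^0_{\gamma t}=\gamma(s^0_t)$, where on the left is program substitution and on the right term substitution.
   Context: Terms (de Bruijn): $s::=n\mid st\mid\lambda s$, $n\in\mathbb N$. Term substitution: $k^k_u=u$, $n^k_u=n$ for $n\ne k$, $(st)^k_u=(s^k_u)(t^k_u)$, $(\lambda s)^k_u=\lambda(s^{k+1}_u)$. Commands are $\mathsf{ret}$, $\mathsf{var}\,n$, $\mathsf{lam}$, $\mathsf{app}$; programs are finite lists of commands. Compilation: $\gamma n=[\mathsf{var}\,n]$, $\gamma(st)=\gamma s++\gamma t++[\mathsf{app}]$, $\gamma(\lambda s)=\mathsf{lam}::\gamma s++[\mathsf{ret}]$. Program substitution $P^k_Q$: $(\mathsf{var}\,k::P)^k_Q=Q++P^k_Q$; $(\mathsf{var}\,n::P)^k_Q=\mathsf{var}\,n::P^k_Q$ for $n\ne k$; $(\mathsf{lam}::P)^k_Q=\mathsf{lam}::P^{k+1}_Q$; $(\mathsf{app}::P)^k_Q=\mathsf{app}::P^k_Q$; $(\mathsf{ret}::P)^0_Q=[\mathsf{ret}]$; $(\mathsf{ret}::P)^{k+1}_Q=\mathsf{ret}::P^k_Q$; $[]^k_Q=[]$. *)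

From Stdlib Require Import List Arith.
Import ListNotations.

Inductive term : Type :=
| Var : nat -> term
| App : term -> term -> term
| Lam : term -> term.

Fixpoint subst (s : term) (k : nat) (u : term) : term :=
  match s with
  | Var n => if Nat.eqb n k then u else Var n
  | App s1 s2 => App (subst s1 k u) (subst s2 k u)
  | Lam s1 => Lam (subst s1 (S k) u)
  end.

Inductive com : Type :=
| ret : com
| var : nat -> com
| lam : com
| app : com.

Definition prog := list com.

Fixpoint gamma (s : term) : prog :=
  match s with
  | Var n => [var n]
  | App s1 s2 => gamma s1 ++ gamma s2 ++ [app]
  | Lam s1 => lam :: gamma s1 ++ [ret]
  end.

Fixpoint psubst (P : prog) (k : nat) (Q : prog) : prog :=
  match P with
  | [] => []
  | var n :: P' => if Nat.eqb n k then Q ++ psubst P' k Q else var n :: psubst P' k Q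
  | lam :: P' => lam :: psubst P' (S k) Q
  | app :: P' => app :: psubst P' k Q
  | ret :: P' => match k with
                 | 0 => [ret]
                 | S k' => ret :: psubst P' k' Q
                 end
  end.

From Stdlib Require Import List Arith.
Import ListNotations.

(* The compiled code of a term is balanced (every [lam] is closed by its own
   [ret]), so program substitution runs through it without being cut off and
   resumes on the continuation [P] at the same index [k]. *)
Lemma psubst_gamma_app (s t : term) (k : nat) (P : prog) :
  psubst (gamma s ++ P) k (gamma t) = gamma (subst s k t) ++ psubst P k (gamma t).
Proof.
  revert k P.
  induction s as [n | s1 IH1 s2 IH2 | s1 IH]; intros k P; simpl.
  - destruct (Nat.eqb n k); reflexivity.
  - rewrite <- !app_assoc, IH1, IH2. reflexivity.
  - rewrite <- app_assoc. simpl. rewrite IH, <- app_assoc. reflexivity.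
Qed.

Theorem lemma11 : forall s t : term, psubst (gamma s) 0 (gamma t) = gamma (subst s 0 t).
Proof.
  intros s t.
  rewrite <- (app_nil_r (gamma s)), psubst_gamma_app.
  apply app_nil_r.
Qed.
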